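(* Let $t_n=n(n+1)/2$. There exists a rational parametric solution of the system \[ t_{x}+t_{y}=t_{p},\quad t_{y}+t_{z}=t_{q},\quad t_{z}+t_{x}=t_{r} \] depending on three parameters; that is, there exist rational functions $x,y,z,p,q,r\in\mathbb{Q}(u,v,w)$ in three independent indeterminates $u,v,w$ which satisfy the system identically in $\mathbb{Q}(u,v,w)$ and such that the field $\mathbb{Q}(x,y,z,p,q,r)$ has transcendence degree $3$ over $\mathbb{Q}$.
   Context: Here $t_n=n(n+1)/2$ is extended to arguments in any field of characteristic $0$ by the same formula. *)

From HB Require Import structures.
From mathcomp Require Import all_boot all_order all_algebra.
From mathcomp Require Import fraction.
From mathcomp Require Import mpoly.
Set Implicit Arguments. Unset Strict Implicit. Unset Printing Implicit Defensive.
Import Order.TTheory GRing.Theory Num.Theory.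
Local Open Scope ring_scope.

Definition tri (K : fieldType) (a : K) : K := a * (a + 1) / 2%:R.

Definition QUVW : fieldType := {fraction {mpoly rat[3]}}.

Definition indet (i : 'I_3) : QUVW := tofrac ('X_i : {mpoly rat[3]}).

Definition qeval (K : fieldType) (n : nat) (P : {mpoly rat[n]}) (s : 'I_n -> K) : K :=
  mmap (ratr : rat -> K) s P.

Definition alg_indep (K : fieldType) (n : nat) (s : 'I_n -> K) : Prop :=
  forall P : {mpoly rat[n]}, qeval P s = 0 -> P = 0.

Definition in_gen_field (K : fieldType) (m : nat) (g : 'I_m -> K) (a : K) : Prop :=
  exists P Q : {mpoly rat[m]}, qeval Q g != 0 /\ a = qeval P g / qeval Q g.

Definition trdeg_gen_eq (K : fieldType) (m : nat) (g : 'I_m -> K) (d : nat) : Prop :=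
  (exists s : 'I_d -> K, (forall i, in_gen_field g (s i)) /\ alg_indep s) /\
  (forall s : 'I_d.+1 -> K, (forall i, in_gen_field g (s i)) -> ~ alg_indep s).

From HB Require Import structures.
From mathcomp Require Import all_boot all_order all_algebra.
From mathcomp Require Import fraction.
From mathcomp Require Import mpoly.
From mathcomp Require Import generic_quotient ring zify.
Import GRing.Theory.
Local Open Scope ring_scope.
Set Implicit Arguments. Unset Strict Implicit.

(* Writing X = 2x + 1, the equation t_x + t_y = t_p becomes
   X^2 - 1 = (P - Y)(P + Y); setting P - Y = a(X - 1) and P + Y = (X + 1)/a
   makes Y an affine function of X with slope (1/a - a)/2.  Chaining three
   such steps with parameters a, b, c from X to Y to Z and back to X gives a
   linear equation for X, whose solution is a rational function of (a, b, c);
   this solves the system for indeterminates a = u, b = v, c = w.  Each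
   parameter is recovered as a = (P - Y)/(X - 1), so Q(x, y, z, p, q, r) is
   all of Q(u, v, w), which contains the three independent u, v, w; conversely
   any four elements of Q(u, v, w) are algebraically dependent, by counting
   monomials of bounded degree after clearing denominators. *)

Lemma qeval_mmap (K : fieldType) (f : {rmorphism rat -> K}) n (P : {mpoly rat[n]}) s :
  qeval P s = mmap f s P.
Proof. by apply: eq_bigr => m _; rewrite fmorph_eq_rat. Qed.

Lemma in_gen_field_ratio (K : fieldType) (f : {rmorphism rat -> K}) m (g : 'I_m -> K) i j k :
  g k != 0 -> in_gen_field g ((g i - g j) / g k).
Proof. by exists ('X_i - 'X_j), 'X_k; rewrite !(qeval_mmap f) mmapB !mmapX !mmap1U. Qed.

Section TriangularPairs.
Variable K : fieldType.
Hypothesis two_neq0 : 2%:R != 0 :> K.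

Definition tri_step (t X : K) : K := (t^-1 - t) / 2%:R * X + (t^-1 + t) / 2%:R.
Definition tri_partner (t X : K) : K := tri_step t X + t * (X - 1).

Lemma tri_step_partner (t X : K) : t != 0 ->
  tri ((X - 1) / 2%:R) + tri ((tri_step t X - 1) / 2%:R)
  = tri ((tri_partner t X - 1) / 2%:R).
Proof.
by move=> t_neq0; rewrite /tri /tri_partner /tri_step; field; rewrite two_neq0 t_neq0.
Qed.

Lemma tri_partner_recover (t X : K) : X != 1 ->
  t = ((tri_partner t X - 1) / 2%:R - (tri_step t X - 1) / 2%:R) / ((X - 1) / 2%:R).
Proof.
by rewrite -subr_eq0 => X_neq1; rewrite /tri_partner; field; rewrite X_neq1 two_neq0.
Qed.

End TriangularPairs.

Definition den_solX (R : comNzRingType) (a b c : R) : R :=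
  8%:R * a * b * c - (1 - a ^+ 2) * (1 - b ^+ 2) * (1 - c ^+ 2).
Definition num_solX (R : comNzRingType) (a b c : R) : R :=
  (1 - c ^+ 2) * (1 - b ^+ 2) * (1 + a ^+ 2) + 2%:R * a * (1 - c ^+ 2) * (1 + b ^+ 2)
  + 4%:R * a * b * (1 + c ^+ 2).
Definition num_solY1 (R : comNzRingType) (a b c : R) : R :=
  (1 - a ^+ 2) * num_solX a b c + (1 - a) ^+ 2 * den_solX a b c.
Definition num_solZ1 (R : comNzRingType) (a b c : R) : R :=
  (1 - b ^+ 2) * ((1 - a ^+ 2) * num_solX a b c + (1 + a ^+ 2) * den_solX a b c)
  + 2%:R * a * (1 - b) ^+ 2 * den_solX a b c.

Section CyclicSolution.
Variables (K : fieldType) (a b c : K).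
Hypotheses (two_neq0 : 2%:R != 0 :> K) (a_neq0 : a != 0) (b_neq0 : b != 0)
  (c_neq0 : c != 0) (den_neq0 : den_solX a b c != 0).

Definition solX : K := num_solX a b c / den_solX a b c.
Definition solY : K := tri_step a solX.
Definition solZ : K := tri_step b solY.

Lemma solX_cycle : tri_step c solZ = solX.
Proof.
move: den_neq0; rewrite /solZ /solY /solX /tri_step /num_solX /den_solX => den_neq0'.
by field; rewrite two_neq0 a_neq0 b_neq0 c_neq0 den_neq0'.
Qed.

Lemma solX_sub1 : solX - 1 = (num_solX a b c - den_solX a b c) / den_solX a b c.
Proof. by rewrite /solX; field. Qed.

Lemma solY_sub1 : solY - 1 = num_solY1 a b c / (2%:R * a * den_solX a b c).
Proof.
move: den_neq0; rewrite /solY /solX /tri_step /num_solY1 => den_neq0'.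
by field; rewrite den_neq0' two_neq0 a_neq0.
Qed.

Lemma solZ_sub1 : solZ - 1 = num_solZ1 a b c / (4%:R * a * b * den_solX a b c).
Proof.
have four_neq0 : 4%:R != 0 :> K by rewrite (natrM _ 2 2) mulf_neq0.
move: den_neq0; rewrite /solZ /solY /solX /tri_step /num_solZ1 => den_neq0'.
by field; rewrite den_neq0' four_neq0 a_neq0 b_neq0.
Qed.

Lemma solX_neq1 : num_solX a b c != den_solX a b c -> solX != 1.
Proof. by move=> num_neq_den; rewrite -subr_eq0 solX_sub1 mulf_neq0 ?invr_neq0 // subr_eq0. Qed.

Lemma solY_neq1 : num_solY1 a b c != 0 -> solY != 1.
Proof. by move=> num_neq0; rewrite -subr_eq0 solY_sub1 !mulf_neq0 ?invr_neq0 ?mulf_neq0. Qed.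

Lemma solZ_neq1 : num_solZ1 a b c != 0 -> solZ != 1.
Proof.
have four_neq0 : 4%:R != 0 :> K by rewrite (natrM _ 2 2) mulf_neq0.
by move=> num_neq0; rewrite -subr_eq0 solZ_sub1 !mulf_neq0 ?invr_neq0 ?mulf_neq0.
Qed.

Definition sol_x : K := (solX - 1) / 2%:R.
Definition sol_y : K := (solY - 1) / 2%:R.
Definition sol_z : K := (solZ - 1) / 2%:R.
Definition sol_p : K := (tri_partner a solX - 1) / 2%:R.
Definition sol_q : K := (tri_partner b solY - 1) / 2%:R.
Definition sol_r : K := (tri_partner c solZ - 1) / 2%:R.
Definition solution (i : 'I_6) : K := nth 0 [:: sol_x; sol_y; sol_z; sol_p; sol_q; sol_r] i.

Lemma sol_tri_xy : tri sol_x + tri sol_y = tri sol_p.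
Proof. exact: tri_step_partner. Qed.

Lemma sol_tri_yz : tri sol_y + tri sol_z = tri sol_q.
Proof. exact: tri_step_partner. Qed.

Lemma sol_tri_zx : tri sol_z + tri sol_x = tri sol_r.
Proof. by rewrite /sol_x -solX_cycle; exact: tri_step_partner. Qed.

Lemma params_in_gen_field (f : {rmorphism rat -> K}) :
  num_solX a b c != den_solX a b c -> num_solY1 a b c != 0 -> num_solZ1 a b c != 0 ->
  [/\ in_gen_field solution a, in_gen_field solution b & in_gen_field solution c].
Proof.
have half_neq0 (X : K) : X != 1 -> (X - 1) / 2%:R != 0.
  by move=> X_neq1; rewrite mulf_neq0 ?invr_neq0 ?subr_eq0.
move=> /solX_neq1 X_neq1 /solY_neq1 Y_neq1 /solZ_neq1 Z_neq1; split.
- rewrite (tri_partner_recover two_neq0 a X_neq1).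
  exact: (in_gen_field_ratio f (@Ordinal 6 3 isT) (@Ordinal 6 1 isT)
           (k := @Ordinal 6 0 isT) (half_neq0 _ X_neq1)).
- rewrite (tri_partner_recover two_neq0 b Y_neq1).
  exact: (in_gen_field_ratio f (@Ordinal 6 4 isT) (@Ordinal 6 2 isT)
           (k := @Ordinal 6 1 isT) (half_neq0 _ Y_neq1)).
- rewrite (tri_partner_recover two_neq0 c Z_neq1) solX_cycle.
  exact: (in_gen_field_ratio f (@Ordinal 6 5 isT) (@Ordinal 6 0 isT)
           (k := @Ordinal 6 2 isT) (half_neq0 _ Z_neq1)).
Qed.

End CyclicSolution.

Lemma exists_nontrivial_relation (K : fieldType) (I J : finType) (F : I -> J -> K) :
  (#|J| < #|I|)%N ->
  exists2 c : I -> K, (exists i, c i != 0) & forall j, \sum_i c i * F i j = 0.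
Proof.
move=> card_JI.
pose A : 'M[K]_(#|I|, #|J|) := \matrix_(i, j) F (enum_val i) (enum_val j).
have /rowV0Pn[r /sub_kermxP rA r_neq0] : kermx A != 0.
  rewrite -mxrank_eq0 mxrank_ker subn_eq0 -ltnNge.
  exact: leq_ltn_trans (rank_leq_col A) card_JI.
exists (fun i => r 0 (enum_rank i)).
  have [k rk_neq0] : exists k, r 0 k != 0.
    apply/existsP; apply: contraNT r_neq0 => /existsPn r0.
    by apply/eqP/rowP => k; rewrite mxE; apply/eqP/negPn.
  by exists (enum_val k); rewrite enum_valK.
move=> j; transitivity ((r *m A) 0 (enum_rank j)); last by rewrite rA mxE.
rewrite mxE (reindex _ (onW_bij _ (enum_val_bij I))) /=.
by apply: eq_bigr => k _; rewrite enum_valK mxE enum_rankK.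
Qed.

Lemma counting_bound n d e : ((n.+1 * d).+1 ^ n <= e)%N ->
  ((n.+1 * (e * d)).+1 ^ n < e.+1 ^ n.+1)%N.
Proof.
move=> le_e.
have le_base : ((n.+1 * (e * d)).+1 <= (n.+1 * d).+1 * e.+1)%N by nia.
apply: (@leq_ltn_trans (((n.+1 * d).+1 * e.+1) ^ n)).
  by case: n le_e le_base => // n _; rewrite leq_exp2r.
by rewrite expnMn expnSr mulnC ltn_pmul2l ?expn_gt0 // ltnS.
Qed.

Lemma fracE (R : idomainType) (x : {fraction R}) :
  exists2 ab : R * R, ab.2 != 0 & x = tofrac ab.1 / tofrac ab.2.
Proof.
elim/quotW: x => r; exists (\n_r, \d_r); first exact: denom_ratioP.
apply: (canRL (mulfK _)); first by rewrite tofrac_eq0 denom_ratioP.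
unlock tofrac; rewrite -[_ * _]/(FracField.mul _ _) -FracField.pi_mul.
apply/eqmodP; rewrite /= FracField.equivfE /FracField.mulf /=.
by rewrite !numden_Ratio ?mulf_neq0 ?denom_ratioP ?oner_neq0 // !mulr1 mulrC.
Qed.

Section FractionField.
Variable n : nat.
Local Notation poly := {mpoly rat[n]}.
Local Notation frac := {fraction {mpoly rat[n]}}.

Definition frac_ratC : {rmorphism rat -> frac} := (@tofrac _ \o @mpolyC n rat)%FUN.

Lemma msizeM_le_pred (p q : poly) : (msize (p * q) <= (msize p + msize q).-1)%N.
Proof.
have [->|p_neq0] := eqVneq p 0; first by rewrite mul0r msize0.
have [->|q_neq0] := eqVneq q 0; first by rewrite mulr0 msize0.
by rewrite msizeM.
Qed.

Lemma msizeX_le (p : poly) k d : (msize p <= d.+1)%N -> (msize (p ^+ k) <= (k * d).+1)%N.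
Proof.
move=> le_p; elim: k => [|k IHk]; first by rewrite expr0 msize1.
by rewrite exprS; apply: leq_trans (msizeM_le_pred _ _) _; rewrite mulSn; lia.
Qed.

Lemma msize_prod_le (I : finType) (F : I -> poly) (D : I -> nat) :
  (forall i, msize (F i) <= (D i).+1)%N -> (msize (\prod_i F i) <= (\sum_i D i).+1)%N.
Proof.
move=> le_F; apply: (big_ind2 (fun p k => msize p <= k.+1)%N) => //; first by rewrite msize1.
by move=> p1 k1 p2 k2 le1 le2; apply: leq_trans (msizeM_le_pred _ _) _; lia.
Qed.

Lemma eq0_small_mcoeff (p : poly) N :
  (msize p <= N.+1)%N ->
  (forall m : {ffun 'I_n -> 'I_N.+1}, p@_[multinom val (m k) | k < n] = 0) -> p = 0.
Proof.
move=> le_p p_m; apply/mpolyP => m; rewrite mcoeff0.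
have [le_m|lt_m] := leqP (mdeg m) N; last first.
  by apply/eqP; rewrite mcoeff_eq0; apply: msize_mdeg_ge; exact: leq_trans le_p lt_m.
pose j : {ffun 'I_n -> 'I_N.+1} := [ffun k => inord (m k)].
suff -> : m = [multinom val (j k) | k < n] by exact: p_m.
apply/mnmP => k; rewrite mnmE ffunE /= inordK // ltnS.
by apply: leq_trans le_m; rewrite mdegE (bigD1 k) //= leq_addr.
Qed.

Lemma mpoly_lin_dep (I : finType) (T : I -> poly) N :
  (forall i, msize (T i) <= N.+1)%N -> (N.+1 ^ n < #|I|)%N ->
  exists2 c : I -> rat, (exists i, c i != 0) & \sum_i c i *: T i = 0.
Proof.
move=> le_T card_I.
have [|c c_neq0 c_rel] := exists_nontrivial_relation
  (fun i (m : {ffun 'I_n -> 'I_N.+1}) => (T i)@_[multinom val (m k) | k < n]).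
  by rewrite card_ffun !card_ord.
exists c => //; apply: (@eq0_small_mcoeff _ N) => [|m].
  apply: (big_ind (fun p => msize p <= N.+1)%N).
  - by rewrite msize0.
  - by move=> p q le_p le_q; apply: leq_trans (msizeD_le _ _) _; rewrite geq_max le_p.
  - by move=> i _; exact: leq_trans (msizeZ_le _ _) (le_T i).
rewrite raddf_sum -{}[RHS](c_rel m); apply: eq_bigr => i _; exact: mcoeffZ.
Qed.

Lemma qeval_monomial_frac m (s : 'I_m -> frac) (a b : 'I_m -> poly) e (mm : 'X_{1..m}) :
  (forall k, b k != 0) -> (forall k, s k = tofrac (a k) / tofrac (b k)) ->
  (forall k, mm k <= e)%N ->
  qeval 'X_[mm] s * \prod_k tofrac (b k) ^+ e
  = tofrac (\prod_k (a k ^+ mm k * b k ^+ (e - mm k))).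
Proof.
move=> b_neq0 s_ab le_mm.
rewrite (qeval_mmap frac_ratC) mmapX /mmap1 rmorph_prod -big_split.
apply: eq_bigr => k _ /=; rewrite s_ab rmorphM !rmorphXn expr_div_n.
rewrite -[in X in _ * X](subnKC (le_mm k)) exprD mulrA divfK //.
by rewrite expf_neq0 // tofrac_eq0.
Qed.

Lemma msize_monomial_frac m (a b : 'I_m -> poly) d e (mm : 'X_{1..m}) :
  (forall k, maxn (msize (a k)) (msize (b k)) <= d.+1)%N -> (forall k, mm k <= e)%N ->
  (msize (\prod_k (a k ^+ mm k * b k ^+ (e - mm k))) <= (m * (e * d)).+1)%N.
Proof.
move=> le_ab le_mm; rewrite -[in (m * _)%N](card_ord m) -sum_nat_const.
apply: msize_prod_le => k; apply: leq_trans (msizeM_le_pred _ _) _.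
have -> : (e * d = mm k * d + (e - mm k) * d)%N by rewrite -mulnDl subnKC.
move: (le_ab k); rewrite geq_max => /andP[/(msizeX_le (mm k)) + /(msizeX_le (e - mm k))].
lia.
Qed.

Lemma sum_mpolyX_neq0 m (I : finType) (c : I -> rat) (mono : I -> 'X_{1..m}) i0 :
  injective mono -> c i0 != 0 -> \sum_i c i *: 'X_[mono i] != 0 :> {mpoly rat[m]}.
Proof.
move=> mono_inj; apply: contraNneq => /(congr1 (mcoeff (mono i0))).
rewrite mcoeff0 raddf_sum (bigD1 i0) //= big1 => [|i ne_i].
  by rewrite mcoeffZ mcoeffX eqxx mulr1 addr0 => ->.
by rewrite mcoeffZ mcoeffX (inj_eq mono_inj) (negbTE ne_i) mulr0.
Qed.

(* Clearing the denominators b_k of s_k = a_k / b_k in the (e+1)^(n+1) monomials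
   with all exponents at most e yields polynomials of degree at most
   (n+1) e d, which span a space of dimension at most ((n+1) e d + 1)^n. *)
Lemma fraction_alg_dep (s : 'I_n.+1 -> frac) : ~ alg_indep s.
Proof.
move=> s_indep.
have /fin_all_exists2[ab b_neq0 s_ab] : forall k, exists2 ab : (poly * poly)%type,
    ab.2 != 0 & s k = tofrac ab.1 / tofrac ab.2 by move=> k; exact: fracE.
pose a k := (ab k).1; pose b k := (ab k).2.
pose d := (\max_k maxn (msize (a k)) (msize (b k)))%N.
have le_d k : (maxn (msize (a k)) (msize (b k)) <= d.+1)%N.
  by apply: leq_trans (leqnSn _); exact: (leq_bigmax_cond k).
pose e := ((n.+1 * d).+1 ^ n)%N.
pose mono (i : {ffun 'I_n.+1 -> 'I_e.+1}) : 'X_{1..n.+1} := [multinom val (i k) | k < n.+1].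
have le_mono i k : (mono i k <= e)%N by rewrite /mono mnmE /= -ltnS ltn_ord.
have mono_inj : injective mono.
  by move=> i j /mnmP eq_ij; apply/ffunP => k; apply: val_inj; have := eq_ij k; rewrite !mnmE.
pose T i := \prod_k (a k ^+ mono i k * b k ^+ (e - mono i k)).
have [|c [i0 c_i0] c_rel] := @mpoly_lin_dep _ T _ (fun i => msize_monomial_frac le_d (le_mono i)).
  by rewrite card_ffun !card_ord; apply: counting_bound.
apply/negP: (sum_mpolyX_neq0 mono_inj c_i0); apply/negPn/eqP/s_indep.
have B_neq0 : \prod_k tofrac (b k) ^+ e != 0.
  by apply/prodf_neq0 => k _; rewrite expf_neq0 // tofrac_eq0 b_neq0.
apply: (mulIf B_neq0); rewrite mul0r -[RHS](rmorph0 (@tofrac _)) -{}c_rel.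
rewrite (qeval_mmap frac_ratC) !raddf_sum mulr_suml /=; apply: eq_bigr => i _.
rewrite mmapZ -mulrA -(qeval_mmap frac_ratC) (qeval_monomial_frac b_neq0 s_ab) //.
by rewrite -mul_mpolyC rmorphM.
Qed.

Lemma tofrac_mpolyX_alg_indep : alg_indep (fun i : 'I_n => tofrac ('X_i : poly)).
Proof.
move=> P; rewrite (qeval_mmap frac_ratC) => P0.
suff /eqP : tofrac P = 0 by rewrite tofrac_eq0 => /eqP.
rewrite -{}P0 [in LHS](mpolyE P) /mmap rmorph_sum; apply: eq_bigr => m _.
rewrite -mul_mpolyC rmorphM mpolyXE_id rmorph_prod /mmap1; congr (_ * _).
by apply: eq_bigr => i _; rewrite rmorphXn.
Qed.

End FractionField.

Definition u : QUVW := indet ord0.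
Definition v : QUVW := indet (inord 1).
Definition w : QUVW := indet ord_max.

Lemma indet_cases (P : QUVW -> Prop) : P u -> P v -> P w -> forall i, P (indet i).
Proof.
move=> Pu Pv Pw [[|[|[|//]]] lt_i3].
- by rewrite (_ : Ordinal _ = ord0) //; apply: val_inj.
- by rewrite (_ : Ordinal _ = inord 1) //; apply: val_inj; rewrite /= inordK.
- by rewrite (_ : Ordinal _ = ord_max) //; apply: val_inj.
Qed.

(* The naturality hypothesis says that E is a polynomial expression with integer
   coefficients, so it commutes with [tofrac] and with evaluation at a point. *)
Lemma indet_expr_neq0 (E : forall R : comNzRingType, R -> R -> R -> R)
    (t0 t1 t2 : rat) :
  (forall (R S : comNzRingType) (f : {rmorphism R -> S}) a b c,
     f (E R a b c) = E S (f a) (f b) (f c)) ->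
  E _ t0 t1 t2 != 0 -> E _ u v w != 0.
Proof.
move=> E_natural; apply: contra => /eqP; rewrite /u /v /w /indet -E_natural.
move/eqP; rewrite tofrac_eq0 => /eqP/(congr1 (meval (fun i => nth 0 [:: t0; t1; t2] i))).
by rewrite meval0 E_natural /= !mevalXU inordK // => ->.
Qed.

Lemma two_neq0 : 2%:R != 0 :> QUVW.
Proof.
apply: (@indet_expr_neq0 (fun R _ _ _ => 2%:R) 2%:R 3%:R 5%:R) => //.
by move=> R S f _ _ _; exact: rmorph_nat.
Qed.

Lemma u_neq0 : u != 0. Proof. exact: (@indet_expr_neq0 (fun _ a _ _ => a) 2%:R 3%:R 5%:R). Qed.
Lemma v_neq0 : v != 0. Proof. exact: (@indet_expr_neq0 (fun _ _ b _ => b) 2%:R 3%:R 5%:R). Qed.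
Lemma w_neq0 : w != 0. Proof. exact: (@indet_expr_neq0 (fun _ _ _ c => c) 2%:R 3%:R 5%:R). Qed.

Lemma den_solX_indet_neq0 : den_solX u v w != 0.
Proof.
apply: (@indet_expr_neq0 _ 2%:R 3%:R 5%:R) => // R S f a b c.
by rewrite /den_solX !(rmorphE, rmorphM).
Qed.

Lemma num_solX_indet_neq_den : num_solX u v w != den_solX u v w.
Proof.
rewrite -subr_eq0.
apply: (@indet_expr_neq0 (fun _ a b c => num_solX a b c - den_solX a b c) 2%:R 3%:R 5%:R) => //.
by move=> R S f a b c; rewrite /num_solX /den_solX !(rmorphE, rmorphM).
Qed.

Lemma num_solY1_indet_neq0 : num_solY1 u v w != 0.
Proof.
apply: (@indet_expr_neq0 _ 2%:R 3%:R 5%:R) => // R S f a b c.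
by rewrite /num_solY1 /num_solX /den_solX !(rmorphE, rmorphM).
Qed.

Lemma num_solZ1_indet_neq0 : num_solZ1 u v w != 0.
Proof.
apply: (@indet_expr_neq0 _ 2%:R 3%:R 5%:R) => // R S f a b c.
by rewrite /num_solZ1 /num_solX /den_solX !(rmorphE, rmorphM).
Qed.

Theorem theorem2 :
  exists x y z p q r : QUVW,
    [/\ tri x + tri y = tri p,
        tri y + tri z = tri q,
        tri z + tri x = tri r &
        trdeg_gen_eq (fun i : 'I_6 => nth 0 [:: x; y; z; p; q; r] i) 3].
Proof.
exists (sol_x u v w), (sol_y u v w), (sol_z u v w),
  (sol_p u v w), (sol_q u v w), (sol_r u v w).
split.
- exact: sol_tri_xy two_neq0 u_neq0.
- exact: sol_tri_yz two_neq0 v_neq0.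
- exact: sol_tri_zx two_neq0 u_neq0 v_neq0 w_neq0 den_solX_indet_neq0.
split; last by move=> s _; exact: fraction_alg_dep.
exists indet; split; last exact: tofrac_mpolyX_alg_indep.
have [] := params_in_gen_field two_neq0 u_neq0 v_neq0 w_neq0 den_solX_indet_neq0
  (frac_ratC 3) num_solX_indet_neq_den num_solY1_indet_neq0 num_solZ1_indet_neq0.
exact: indet_cases.
Qed.
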